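(* Let $0<q<1$ (in the paper $q=1/p$ for a prime $p$). For all integers $k\ge0$ and $s\ge0$, $$T_1(k,s)=\frac{\Pi_k(q^2)}{\Pi_{2k}(q)}\Big(1-q^{s+1}\sum_{j=0}^{k-1}q^{2j}\frac{\Pi_{2j}(q)\,\Pi_{j+s}(q^2)}{\Pi_j(q^2)^2\,\Pi_s(q^2)}\Big)$$ and $$T_3(k,s)=\frac{\Pi_k(q^2)}{\Pi_{2k+1}(q)}\Big(1-q-q^{3s+3}\sum_{j=0}^{k-1}q^{2j}\frac{\Pi_{2j+1}(q)\,\Pi_{j+s}(q^2)}{\Pi_j(q^2)^2\,\Pi_s(q^2)}\Big).$$
   Context: For $n\ge 0$, $\Pi_n(q)=\prod_{j=1}^n(1-q^j)$ (so $\Pi_0=1$). For $\beta\in\{1,3\}$, $k\ge0$, $s\ge0$: $T_\beta(k,s)=1$ if $k=0$, and $T_\beta(k,s)=\sum_{j=0}^{s} q^{\beta j}\,\frac{\Pi_{k+j-1}(q^2)}{\Pi_j(q^2)\,\Pi_{k-1}(q^2)}$ if $k\ge1$. Empty sums are $0$. *)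

From HB Require Import structures.
From mathcomp Require Import all_boot all_order all_algebra.
Set Implicit Arguments. Unset Strict Implicit. Unset Printing Implicit Defensive.
Import Order.TTheory GRing.Theory Num.Theory.
Local Open Scope ring_scope.

Definition Pi {R : pzRingType} (n : nat) (q : R) : R :=
  \prod_(1 <= j < n.+1) (1 - q ^+ j).

Definition T {R : fieldType} (beta k s : nat) (q : R) : R :=
  if k == 0%N then 1
  else \sum_(0 <= j < s.+1)
         q ^+ (beta * j) * (Pi (k + j).-1 (q ^+ 2) / (Pi j (q ^+ 2) * Pi k.-1 (q ^+ 2))).

From HB Require Import structures.
From mathcomp Require Import all_boot all_order all_algebra.
From mathcomp Require Import ring.
Set Implicit Arguments. Unset Strict Implicit. Unset Printing Implicit Defensive.
Import Order.TTheory GRing.Theory Num.Theory.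
Local Open Scope ring_scope.

(* With Q = q^2 and x = q^beta, T_beta(k+1, s) is the truncated series
   sum_(j <= s) x^j [k+j choose j]_Q.  The q-Pascal rule turns it into a
   first-order recursion in k,
     (1 - x Q^k) T_beta(k+1, s) = T_beta(k, s) - x^(s+1) Q^k [k+s choose s]_Q,
   and the claimed closed forms obey the same recursion from the same initial
   value: their prefactor Pi_k(q^2) / Pi_(2k+e)(q) is divided by exactly
   1 - x Q^k when k grows by one, and the new summand accounts for the
   inhomogeneous term. *)

Lemma Pi0 (R : pzRingType) (q : R) : Pi 0 q = 1.
Proof. by rewrite /Pi big_geq. Qed.

Lemma PiS (R : pzRingType) n (q : R) : Pi n.+1 q = Pi n q * (1 - q ^+ n.+1).
Proof. by rewrite /Pi big_nat_recr. Qed.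

Section GaussianBinomial.
Variables (F : fieldType) (Q : F).
Hypothesis Q_nonroot : forall n, Q ^+ n.+1 != 1.

Lemma subr1XS_neq0 n : 1 - Q ^+ n.+1 != 0.
Proof. by rewrite subr_eq0 eq_sym Q_nonroot. Qed.

Lemma Pi_neq0 n : Pi n Q != 0.
Proof.
by elim: n => [|n IH]; rewrite ?Pi0 ?oner_neq0 // PiS mulf_neq0 ?subr1XS_neq0.
Qed.

Definition qbin k j := Pi (k + j) Q / (Pi j Q * Pi k Q).

Lemma qbin_n0 k : qbin k 0 = 1.
Proof. by rewrite /qbin addn0 Pi0 mul1r divff ?Pi_neq0. Qed.

Lemma qbin_0n j : qbin 0 j = 1.
Proof. by rewrite /qbin add0n Pi0 mulr1 divff ?Pi_neq0. Qed.

Lemma qbin_SS k j : qbin k.+1 j.+1 = qbin k j.+1 + Q ^+ k.+1 * qbin k.+1 j.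
Proof.
rewrite /qbin addSn addnS !PiS.
have Pk := Pi_neq0 k; have Pj := Pi_neq0 j.
have := subr1XS_neq0 k; have := subr1XS_neq0 j.
rewrite !exprS !exprD; set A := Q ^+ k; set B := Q ^+ j => Bj Ak.
by field; rewrite Pk Pj Ak Bj.
Qed.

Definition qbin_sum (x : F) k s :=
  if k is k'.+1 then \sum_(0 <= j < s.+1) x ^+ j * qbin k' j else 1.

Lemma qbin_sum_rec x k s :
  (1 - x * Q ^+ k) * qbin_sum x k.+1 s =
  qbin_sum x k s - x ^+ s.+1 * (Q ^+ k * qbin k s).
Proof.
elim: s => [|s IH].
  by case: k => [|k] /=; rewrite ?big_nat1 !qbin_n0 expr1; ring.
rewrite /= big_nat_recr //= mulrDr IH.
case: k IH => [|k] _ /=; first by rewrite !qbin_0n !exprS; ring.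
by rewrite [in RHS]big_nat_recr //= qbin_SS !exprS; ring.
Qed.

Lemma qbin_sum_closed n (x a : F) s (r t : nat -> F) :
  (forall k, x * Q ^+ k != 1) -> r 0 * a = 1 ->
  (forall k, (1 - x * Q ^+ k) * r k.+1 = r k) ->
  (forall k, r k * t k = Q ^+ k * qbin k s) ->
  qbin_sum x n s = r n * (a - x ^+ s.+1 * \sum_(0 <= j < n) t j).
Proof.
move=> x_nonroot r0 r_rec rt; apply/esym; elim: n => [|k IH].
  by rewrite big_geq // mulr0 subr0.
have : 1 - x * Q ^+ k != 0 by rewrite subr_eq0 eq_sym x_nonroot.
move/mulfI; apply; rewrite qbin_sum_rec -IH -rt big_nat_recr //= [LHS]mulrA r_rec.
ring.
Qed.

End GaussianBinomial.

Section ClosedForms.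
Variables (F : fieldType) (q : F).
Hypothesis q_nonroot : forall n, q ^+ n.+1 != 1.

Lemma sqr_nonroot n : (q ^+ 2) ^+ n.+1 != 1.
Proof. by rewrite -exprM mulnS addSn q_nonroot. Qed.

Lemma T_qbin_sum beta k s : T beta k s q = qbin_sum (q ^+ 2) (q ^+ beta) k s.
Proof. by case: k => //= k; apply: eq_bigr => j _; rewrite exprM. Qed.

Lemma Pi_ratio_summand m k s :
  Pi k (q ^+ 2) / Pi m q *
    (q ^+ (2 * k) * (Pi m q * Pi (k + s) (q ^+ 2) /
                     (Pi k (q ^+ 2) ^+ 2 * Pi s (q ^+ 2)))) =
  (q ^+ 2) ^+ k * qbin (q ^+ 2) k s.
Proof.
have := Pi_neq0 q_nonroot m; have := Pi_neq0 sqr_nonroot k.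
have := Pi_neq0 sqr_nonroot s.
rewrite /qbin -exprM => Ps Pk Pm.
by field; rewrite Ps Pk Pm.
Qed.

Lemma Pi_even_ratio_rec k :
  (1 - q * (q ^+ 2) ^+ k) * (Pi k.+1 (q ^+ 2) / Pi (2 * k.+1) q) =
  Pi k (q ^+ 2) / Pi (2 * k) q.
Proof.
have := Pi_neq0 q_nonroot (2 * k).
have := subr1XS_neq0 q_nonroot (2 * k); have := subr1XS_neq0 q_nonroot (2 * k).+1.
rewrite mulnS !PiS -!exprM mulnS add2n !exprS; set A := q ^+ (2 * k) => h2 h1 P.
by field; rewrite h2 h1 P.
Qed.

Lemma Pi_odd_ratio_rec k :
  (1 - q ^+ 3 * (q ^+ 2) ^+ k) * (Pi k.+1 (q ^+ 2) / Pi (2 * k.+1).+1 q) =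
  Pi k (q ^+ 2) / Pi (2 * k).+1 q.
Proof.
have := Pi_neq0 q_nonroot (2 * k); have := subr1XS_neq0 q_nonroot (2 * k).
have := subr1XS_neq0 q_nonroot (2 * k).+1; have := subr1XS_neq0 q_nonroot (2 * k).+2.
rewrite mulnS !PiS -!exprM mulnS add2n !exprS; set A := q ^+ (2 * k) => h3 h2 h1 P.
by field; rewrite h3 h2 h1 P.
Qed.

End ClosedForms.

Theorem lemma5p1 (R : realFieldType) (q : R) (hq0 : 0 < q) (hq1 : q < 1)
    (k s : nat) :
  T 1 k s q =
    Pi k (q ^+ 2) / Pi (2 * k) q *
    (1 - q ^+ s.+1 *
         \sum_(0 <= j < k)
           q ^+ (2 * j) * (Pi (2 * j) q * Pi (j + s) (q ^+ 2) /
                           (Pi j (q ^+ 2) ^+ 2 * Pi s (q ^+ 2))))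
  /\
  T 3 k s q =
    Pi k (q ^+ 2) / Pi (2 * k).+1 q *
    (1 - q - q ^+ (3 * s + 3) *
         \sum_(0 <= j < k)
           q ^+ (2 * j) * (Pi (2 * j).+1 q * Pi (j + s) (q ^+ 2) /
                           (Pi j (q ^+ 2) ^+ 2 * Pi s (q ^+ 2)))).
Proof.
have q_nonroot n : q ^+ n.+1 != 1 by rewrite lt_eqF // exprn_ilt1 ?ltW.
have Q_nonroot := sqr_nonroot q_nonroot.
rewrite !T_qbin_sum // (_ : 3 * s + 3 = 3 * s.+1)%N; last by rewrite mulnS addnC.
rewrite exprM expr1.
split.
- apply: (qbin_sum_closed Q_nonroot k (r := fun k => Pi k (q ^+ 2) / Pi (2 * k) q)).
  + by move=> j; rewrite -exprM -exprS q_nonroot.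
  + by rewrite muln0 !Pi0 divr1 mulr1.
  + exact: Pi_even_ratio_rec q_nonroot.
  + by move=> j; apply: Pi_ratio_summand.
- apply: (qbin_sum_closed Q_nonroot k (r := fun k => Pi k (q ^+ 2) / Pi (2 * k).+1 q)).
  + by move=> j; rewrite -exprM -exprD q_nonroot.
  + by rewrite muln0 PiS !Pi0 !mul1r mulVf ?subr1XS_neq0.
  + by move=> j; apply: Pi_odd_ratio_rec q_nonroot j.
  + by move=> j; apply: Pi_ratio_summand.
Qed.
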